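(* Let $\phi$ be a reduced Boolean formula in the variables $x_1,\dots,x_n$ defining a set $S \subseteq \{0,1\}^n$ and let $Q \subseteq [0,1]^n$ be any convex set containing $S$. Then $\phi(Q) \cap \mathbb{Z}^n = S$.
   Context: Boolean formulas are built from input variables $x_1,\dots,x_n$ using $\wedge$, $\vee$, $\neg$, interpreted as functions $\{0,1\}^n\to\{0,1\}$; $\phi$ defines $S=\{x\in\{0,1\}^n:\phi(x)=1\}$. A formula is reduced if negations apply only to input variables. For a reduced $\phi$ and convex $Q\subseteq[0,1]^n$, $\phi(Q)$ is defined recursively: $x_i$ is replaced by $\{x \in Q : x_i = 1\}$; $\neg x_i$ by $\{x \in Q : x_i = 0\}$; a conjunction by the intersection of the corresponding sets; a disjunction by the convex hull of the union of the corresponding sets. *)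

From mathcomp Require Import all_boot all_order all_algebra.
From mathcomp Require Import boolp classical_sets reals.
Set Implicit Arguments. Unset Strict Implicit. Unset Printing Implicit Defensive.
Import Order.TTheory GRing.Theory Num.Theory.
Local Open Scope classical_set_scope.
Local Open Scope ring_scope.

Definition pt (R : realType) (n : nat) := 'I_n -> R.

(* Reduced Boolean formulas over x_1..x_n: negation only on variables. *)
Inductive rformula (n : nat) : Type :=
| RVar of 'I_n
| RNVar of 'I_n
| RAnd of rformula n & rformula n
| ROr of rformula n & rformula n.

Fixpoint reval (n : nat) (phi : rformula n) (b : 'I_n -> bool) : bool :=
  match phi with
  | RVar i => b i
  | RNVar i => ~~ b i
  | RAnd p q => reval p b && reval q b
  | ROr p q => reval p b || reval q b
  end.

Definition bvec (R : realType) (n : nat) (b : 'I_n -> bool) : pt R n :=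
  fun i => (b i)%:R.

Definition defset (R : realType) (n : nat) (phi : rformula n) : set (pt R n) :=
  [set x | exists b : 'I_n -> bool, x = bvec R b /\ reval phi b].

Definition cube (R : realType) (n : nat) : set (pt R n) :=
  [set x | forall i, 0 <= x i <= 1].

Definition intpts (R : realType) (n : nat) : set (pt R n) :=
  [set x | forall i, x i \is a Num.int].

Definition convex (R : realType) (n : nat) (A : set (pt R n)) : Prop :=
  forall x y (t : R), A x -> A y -> 0 <= t <= 1 ->
    A (fun i => t * x i + (1 - t) * y i).

Definition hull (R : realType) (n : nat) (A : set (pt R n)) : set (pt R n) :=
  [set x | exists (m : nat) (l : 'I_m -> R) (p : 'I_m -> pt R n),
      [/\ forall k, 0 <= l k, \sum_(k < m) l k = 1, forall k, A (p k)
        & forall i, x i = \sum_(k < m) l k * p k i]].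

Fixpoint relax (R : realType) (n : nat) (phi : rformula n) (Q : set (pt R n))
  : set (pt R n) :=
  match phi with
  | RVar i => [set x | Q x /\ x i = 1]
  | RNVar i => [set x | Q x /\ x i = 0]
  | RAnd p q => relax p Q `&` relax q Q
  | ROr p q => hull (relax p Q `|` relax q Q)
  end.

From mathcomp Require Import all_boot all_order all_algebra.
From mathcomp Require Import boolp classical_sets reals.
From mathcomp Require Import zify.
Set Implicit Arguments. Unset Strict Implicit. Unset Printing Implicit Defensive.
Import Order.TTheory GRing.Theory Num.Theory.
Local Open Scope classical_set_scope.
Local Open Scope ring_scope.

(* All relaxations [relax phi Q] lie in the cube, and a 0/1 vector is an
   extreme point of the cube: any convex combination of cube points equal to
   it only uses the vector itself.  Hence a 0/1 vector in [relax (ROr p q) Q]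
   already lies in [relax p Q] or [relax q Q], and by induction the 0/1
   vectors of [relax phi Q] are exactly those of S.  Finally the only integer
   points of the cube are its 0/1 vectors. *)

Lemma hull_sub (R : realType) (n : nat) (A : set (pt R n)) : A `<=` hull A.
Proof.
move=> x Ax; exists 1%N, (fun=> 1), (fun=> x).
by split=> [_||_|i]; rewrite ?ler01 ?big_ord1 ?mul1r.
Qed.

Lemma hull_sub_cube (R : realType) (n : nat) (A : set (pt R n)) :
  A `<=` @cube R n -> hull A `<=` @cube R n.
Proof.
move=> AC x [m [l [p [l_ge0 l_sum1 Ap xE]]]] i; rewrite xE.
have /all_and2[p_ge0 p_le1] k : 0 <= p k i /\ p k i <= 1.
  by apply/andP; exact: AC _ (Ap k) i.
apply/andP; split; first by apply: sumr_ge0 => k _; rewrite mulr_ge0.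
by rewrite -l_sum1; apply: ler_sum => k _; apply: ler_piMr.
Qed.

Lemma relax_sub_cube (R : realType) (n : nat) (phi : rformula n)
    (Q : set (pt R n)) :
  Q `<=` @cube R n -> relax phi Q `<=` @cube R n.
Proof.
move=> QC; elim: phi => [i|i|p IHp q IHq|p IHp q IHq] /=.
- by move=> x [/QC].
- by move=> x [/QC].
- by move=> x [/IHp].
- by apply: hull_sub_cube => x [/IHp|/IHq].
Qed.

Lemma weights_sum0_eq0 (R : numDomainType) (m : nat) (l y : 'I_m -> R) :
  (forall k, 0 <= l k) -> (forall k, 0 <= y k) ->
  \sum_(k < m) l k * y k = 0 -> forall k, l k != 0 -> y k = 0.
Proof.
move=> l_ge0 y_ge0 sum0 k lk_neq0.
have /eqP := psumr_eq0P (fun k _ => mulr_ge0 (l_ge0 k) (y_ge0 k)) sum0 (i:=k) isT.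
by rewrite mulf_eq0 (negbTE lk_neq0) => /eqP.
Qed.

Lemma weights_sum1_eq1 (R : numDomainType) (m : nat) (l y : 'I_m -> R) :
  (forall k, 0 <= l k) -> \sum_(k < m) l k = 1 -> (forall k, y k <= 1) ->
  \sum_(k < m) l k * y k = 1 -> forall k, l k != 0 -> y k = 1.
Proof.
move=> l_ge0 l_sum1 y_le1 sum1 k lk_neq0.
apply/eqP; rewrite eq_sym -subr_eq0; apply/eqP.
apply: (weights_sum0_eq0 (y := fun j => 1 - y j) l_ge0 _ _ lk_neq0) => [j|].
  by rewrite subr_ge0.
by under eq_bigr do rewrite mulrBr mulr1; rewrite sumrB l_sum1 sum1 subrr.
Qed.

Lemma weights_sum1_neq0 (R : numDomainType) (m : nat) (l : 'I_m -> R) :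
  \sum_(k < m) l k = 1 -> exists k, l k != 0.
Proof.
move=> l_sum1; apply/existsP; apply: contra_eqT l_sum1 => /existsPn l_eq0.
rewrite big1 ?(eq_sym 0) ?oner_eq0 // => k _.
by apply/eqP; rewrite -[_ == _]negbK l_eq0.
Qed.

Lemma bvec_extreme (R : realType) (n m : nat) (l : 'I_m -> R)
    (p : 'I_m -> pt R n) (b : 'I_n -> bool) :
  (forall k, 0 <= l k) -> \sum_(k < m) l k = 1 ->
  (forall k, @cube R n (p k)) ->
  (forall i, bvec R b i = \sum_(k < m) l k * p k i) ->
  forall k, l k != 0 -> p k = bvec R b.
Proof.
move=> l_ge0 l_sum1 pC bE k lk_neq0; apply: funext => i.
have p_ge0 j : 0 <= p j i by case/andP: (pC j i).
have p_le1 j : p j i <= 1 by case/andP: (pC j i).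
move: (bE i); rewrite /bvec; case: (b i) => /esym sumE.
- exact: weights_sum1_eq1 l_ge0 l_sum1 p_le1 sumE k lk_neq0.
- exact: weights_sum0_eq0 l_ge0 p_ge0 sumE k lk_neq0.
Qed.

Lemma relax_bvec_sound (R : realType) (n : nat) (phi : rformula n)
    (Q : set (pt R n)) (b : 'I_n -> bool) :
  Q `<=` @cube R n -> relax phi Q (bvec R b) -> reval phi b.
Proof.
move=> QC; elim: phi => [i|i|p IHp q IHq|p IHp q IHq] /=.
- by case=> _; rewrite /bvec; case: (b i) => //= /eqP; rewrite eq_sym oner_eq0.
- by case=> _; rewrite /bvec; case: (b i) => //= /eqP; rewrite oner_eq0.
- by case=> /IHp -> /IHq.
- move=> [m [l [pk [l_ge0 l_sum1 pk_in bE]]]].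
  have pkC k : @cube R n (pk k).
    by case: (pk_in k) => /relax_sub_cube; apply.
  have [k lk_neq0] := weights_sum1_neq0 l_sum1.
  move: (pk_in k); rewrite (bvec_extreme l_ge0 l_sum1 pkC bE lk_neq0).
  by case=> [/IHp -> | /IHq ->]; rewrite ?orbT.
Qed.

Lemma relax_bvec_complete (R : realType) (n : nat) (phi : rformula n)
    (Q : set (pt R n)) (b : 'I_n -> bool) :
  reval phi b -> Q (bvec R b) -> relax phi Q (bvec R b).
Proof.
elim: phi => [i|i|p IHp q IHq|p IHp q IHq] /=.
- by move=> bi Qb; split; rewrite // /bvec bi.
- by move=> /negbTE bi Qb; split; rewrite // /bvec bi.
- by case/andP=> /IHp bp /IHq bq Qb; split; [apply: bp | apply: bq].
- by case/orP=> [/IHp bp | /IHq bq] Qb; apply: hull_sub; [left | right]; auto.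
Qed.

Lemma bvec_intpts (R : realType) (n : nat) (b : 'I_n -> bool) :
  @intpts R n (bvec R b).
Proof. by move=> i; rewrite /bvec; case: (b i); rewrite ?intr_int. Qed.

Lemma cube_intpts_bvec (R : realType) (n : nat) (x : pt R n) :
  @cube R n x -> @intpts R n x -> x = bvec R (fun i => x i == 1).
Proof.
move=> xC xZ; apply: funext => i; rewrite /bvec.
have /intrP[z xiE] := xZ i.
move: (xC i); rewrite xiE ler0z lerz1 => /andP[z_ge0 z_le1].
have [->|->] : z = 0 \/ z = 1 by lia.
- by rewrite eq_sym oner_eq0.
- by rewrite eqxx.
Qed.

Theorem corollary4p6 (R : realType) (n : nat) (phi : rformula n)
  (Q : set (pt R n)) :
  Q `<=` @cube R n -> convex Q -> @defset R n phi `<=` Q ->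
  relax phi Q `&` @intpts R n = @defset R n phi.
Proof.
move=> QC _ SQ; apply/seteqP; split.
- move=> x [x_relax xZ].
  have xE := cube_intpts_bvec (relax_sub_cube QC x_relax) xZ.
  exists (fun i => x i == 1); split => //.
  by apply: (relax_bvec_sound QC); rewrite -xE.
- move=> x Sx; split; last by case: Sx => b [-> _]; apply: bvec_intpts.
  by have := SQ _ Sx; case: Sx => b [-> phib]; apply: relax_bvec_complete.
Qed.
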